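(* Let $B$ be a regular ROBP of length $n$ and width $w$, where $n\ge2$ is a power of $2$, with random walk matrices $\mathbf{M}_i$ and $\mathbf{M}_{\ell..r}$ as in the context. Let $0<\gamma<1/2$ and $\varepsilon^{(i)}=\frac{\gamma^{i+1}}{10(i+1)^2\log(n)}$ for integers $i\ge0$. For every $(\ell,r)\in\mathsf{BS}_n$ let $\mathbf{M}^{(0)}_{\ell..r}$ be an $(\varepsilon^{(0)}/3)$-SV approximation of $\mathbf{M}_{\ell..r}$, and define $\mathbf{M}^{(k)}_{\ell..r}$ by the recursion in the context. Then for every integer $k\ge0$ and every $(\ell,r)\in\mathsf{BS}_n$, $\mathbf{M}^{(k)}_{\ell..r}$ is a $C_t\varepsilon^{(k)}$-SV approximation of $\mathbf{M}_{\ell..r}$, where $t=\log(r-\ell)$ and $C_t=(1+1/\log(n))^t/3$.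
   Context: Logarithms are base $2$. A ROBP of length $n$ and width $w$ is given by transition functions $B_i:[w]\times\{0,1\}\to[w]$, $i\in[n]$; it is regular if for every $i$ every $v\in[w]$ has exactly two preimages $(u,b)$ under $B_i$. $\mathbf{M}_i(b)[u,v]=1$ if $B_i(u,b)=v$ and $0$ otherwise; $\mathbf{M}_i=\frac12(\mathbf{M}_i(0)+\mathbf{M}_i(1))$ (doubly stochastic by regularity); $\mathbf{M}_{\ell..r}=\prod_{i=\ell+1}^r\mathbf{M}_i$. $\mathsf{BS}_n=\{(\ell,r):\exists i,k\ge 0,\ \ell=i2^k,\ r=\ell+2^k,\ 0\le\ell<r\le n\}$. Recursion: for $(\ell,r)\in\mathsf{BS}_n$ with $r-\ell=1$ and $k\ge1$, $\mathbf{M}^{(k)}_{\ell..r}=\mathbf{M}_r$; for $r-\ell\ge2$ and $k\ge1$, with $m=(\ell+r)/2$, $\mathbf{M}^{(k)}_{\ell..r}=\sum_{i+j=k}\mathbf{M}^{(i)}_{\ell..m}\mathbf{M}^{(j)}_{m..r}-\sum_{i+j=k-1}\mathbf{M}^{(i)}_{\ell..m}\mathbf{M}^{(j)}_{m..r}$ (sums over integers $i,j\ge0$). For $\mathbf{A}\in\mathbb{R}^{w\times w}$, $y\in\mathbb{R}^w$, let $D(\mathbf{A},y)=\|y\|_2^2-\|\mathbf{A}y\|_2^2$. For a doubly stochastic $\mathbf{W}$, a (not necessarily stochastic) matrix $\widetilde{\mathbf{W}}$ is an $\varepsilon$-SV approximation of $\mathbf{W}$ if for all $x,y\in\mathbb{R}^w$,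 $|x^\top(\widetilde{\mathbf{W}}-\mathbf{W})y|\le\varepsilon\cdot\frac{D(\mathbf{W}^\top,x)+D(\mathbf{W},y)}{2}$. *)

From HB Require Import structures.
From mathcomp Require Import all_boot all_order all_algebra.
From mathcomp Require Import reals.
Set Implicit Arguments. Unset Strict Implicit. Unset Printing Implicit Defensive.
Import Order.TTheory GRing.Theory Num.Theory.
Local Open Scope ring_scope.

Section ROBP.
Variable R : realType.
Variable w : nat.

Definition regular_robp (n : nat) (B : nat -> 'I_w -> bool -> 'I_w) : Prop :=
  forall i, (1 <= i <= n)%N -> forall v : 'I_w,
    #|[set ub : 'I_w * bool | B i ub.1 ub.2 == v]| = 2%N.

Definition Mb (B : nat -> 'I_w -> bool -> 'I_w) (i : nat) (b : bool) : 'M[R]_w :=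
  \matrix_(u, v) (if B i u b == v then 1 else 0).

Definition Mi (B : nat -> 'I_w -> bool -> 'I_w) (i : nat) : 'M[R]_w :=
  2^-1 *: (Mb B i false + Mb B i true).

(* M_{l..r} = M_{l+1} M_{l+2} ... M_r *)
Definition Mlr (B : nat -> 'I_w -> bool -> 'I_w) (l r : nat) : 'M[R]_w :=
  foldr (fun i A => Mi B i.+1 *m A) 1%:M (iota l (r - l)).

Definition in_BS (n l r : nat) : Prop :=
  exists i k : nat, l = (i * 2 ^ k)%N /\ r = (l + 2 ^ k)%N /\ (l < r <= n)%N.

Definition sqnorm (y : 'cV[R]_w) : R := \sum_(j < w) (y j 0) ^+ 2.

Definition Dfun (A : 'M[R]_w) (y : 'cV[R]_w) : R := sqnorm y - sqnorm (A *m y).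

Definition sv_approx (eps : R) (W Wt : 'M[R]_w) : Prop :=
  forall x y : 'cV[R]_w,
    `|(x^T *m (Wt - W) *m y) 0 0| <= eps * ((Dfun W^T x + Dfun W y) / 2).

End ROBP.

(* Write the approximations of the two halves as A_i = W1 + E_i and B_j = W2 + F_j.
   In M^(k) = sum_(i+j=k) A_i B_j - sum_(i+j=k-1) A_i B_j the W1 W2 terms and the
   terms linear in one error telescope, leaving W1 W2 + E_k W2 + W1 F_k plus the
   products E_i F_j.  Since D(W1 W2, y) = D(W2, y) + D(W1, W2 y), the linear terms
   cost eps_k with respect to W1 W2, and testing against a rescaled x bounds each
   product E_i F_j by eps_i eps_j.  With eps_i ~ gamma^(i+1) / (i+1)^2 the two
   Cauchy products of the eps_i are at most eps_k / log n, by the partial-fraction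
   bound sum_(i+j=k) 1/((i+1)(j+1))^2 <= 6/(k+2)^2 and gamma < 1/2: each level
   costs a factor 1 + 1/log n, and C_t stays <= 1 since (1 + 1/m)^m <= e <= 3. *)

From mathcomp Require Import all_boot all_order all_algebra.
From mathcomp Require Import reals sequences exp.
From mathcomp Require Import ring lra zify.
Set Implicit Arguments. Unset Strict Implicit. Unset Printing Implicit Defensive.
Import Order.TTheory GRing.Theory Num.Theory.
Local Open Scope ring_scope.

Lemma big_ord_subn {V : nmodType} k (F : nat -> V) :
  \sum_(i < k.+1) F (k - i)%N = \sum_(i < k.+1) F i.
Proof.
by rewrite [RHS](reindex_inj rev_ord_inj); apply: eq_bigr => i _; rewrite /= subSS.
Qed.

Section Numerics.
Variable R : realFieldType.
Implicit Types (a b : nat -> R) (g c M : R).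

Definition cauchy_prod a b k : R := \sum_(i < k.+1) a i * b (k - i)%N.

Lemma cauchy_prodZ c a k :
  cauchy_prod (fun i => c * a i) (fun i => c * a i) k = c ^+ 2 * cauchy_prod a a k.
Proof. by rewrite /cauchy_prod mulr_sumr; apply: eq_bigr => i _; ring. Qed.

Lemma cauchy_prod_ge0 a b k :
  (forall i, 0 <= a i) -> (forall i, 0 <= b i) -> 0 <= cauchy_prod a b k.
Proof. by move=> a0 b0; apply: sumr_ge0 => i _; rewrite mulr_ge0. Qed.

Definition inv_sq (i : nat) : R := ((i.+1)%:R ^+ 2)^-1.

Lemma inv_sq_ge0 i : 0 <= inv_sq i.
Proof. by rewrite invr_ge0 exprn_ge0. Qed.

Lemma sum_inv_sq_le n : \sum_(i < n.+1) inv_sq i <= 2 - (n.+1)%:R^-1.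
Proof.
elim: n => [|n IH]; first by rewrite big_ord1 /inv_sq expr1n invr1; lra.
rewrite big_ord_recr /= [inv_sq _]/inv_sq.
set x : R := (n.+1)%:R; have x_gt0 : 0 < x by rewrite ltr0Sn.
have -> : (n.+2)%:R = x + 1 by rewrite natr1.
have telescope : ((x + 1) ^+ 2)^-1 + (x + 1)^-1 - x^-1 = - (x * (x + 1) ^+ 2)^-1.
  by field; rewrite !gt_eqF //; lra.
have : 0 <= (x * (x + 1) ^+ 2)^-1 by rewrite invr_ge0 mulr_ge0 ?sqr_ge0 ?ltW.
move: IH telescope; rewrite -/x; clearbody x; lra.
Qed.

Lemma sum_harmonic_le n : \sum_(i < n.+1) ((i.+1)%:R : R)^-1 <= (n.+2)%:R / 2.
Proof.
elim: n => [|n IH]; first by rewrite big_ord1 invr1; lra.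
rewrite big_ord_recr /= -[(n.+3)%:R]natr1 mulrDl mul1r lerD //.
by rewrite lef_pV2 ?posrE ?ltr0Sn // (ler_nat R 2).
Qed.

(* Partial fractions: if a + b = N then 1/(ab)^2 = (1/a^2 + 1/b^2 + (2/N)(1/a + 1/b)) / N^2. *)
Lemma cauchy_prod_inv_sq_le k : cauchy_prod inv_sq inv_sq k * (k.+2)%:R ^+ 2 <= 6.
Proof.
set N : R := (k.+2)%:R; have N_gt0 : 0 < N by rewrite ltr0Sn.
set H := \sum_(i < k.+1) ((i.+1)%:R : R)^-1.
have -> : cauchy_prod inv_sq inv_sq k * N ^+ 2 = \sum_(i < k.+1)
    (inv_sq i + inv_sq (k - i)%N + 2 / N * ((i.+1)%:R^-1 + ((k - i).+1)%:R^-1)).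
  rewrite /cauchy_prod mulr_suml; apply: eq_bigr => i _; rewrite /inv_sq.
  have ik : (i <= k)%N by rewrite -ltnS.
  have -> : ((k - i).+1)%:R = N - (i.+1)%:R :> R by rewrite -natrB; [congr _%:R|]; lia.
  have a_gt0 : 0 < (i.+1)%:R :> R by rewrite ltr0Sn.
  have b_gt0 : 0 < N - (i.+1)%:R by rewrite subr_gt0 ltr_nat !ltnS.
  move: a_gt0 b_gt0; set a : R := (i.+1)%:R.
  by clearbody a N => a_gt0 b_gt0; field; rewrite !gt_eqF.
rewrite !big_split /= -mulr_sumr big_split /= big_ord_subn.
rewrite (big_ord_subn k (fun j => ((j.+1)%:R : R)^-1)) -/H.
have S : \sum_(i < k.+1) inv_sq i <= 2.
  by apply: le_trans (sum_inv_sq_le k) _; rewrite lerBlDr lerDl invr_ge0 ler0n.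
have := sum_harmonic_le k; rewrite -/N -/H => HN.
have : 2 / N * (H + H) <= 2 / N * N.
  by apply: ler_wpM2l; [rewrite divr_ge0 ?ltW | move: HN; clearbody N H; lra].
by rewrite divfK ?gt_eqF //; move: S; clearbody N H; lra.
Qed.

Definition sv_eps g M (i : nat) : R := g ^+ i.+1 / (10 * (i.+1)%:R ^+ 2 * M).

Lemma sv_eps_gt0 g M i : 0 < g -> 0 < M -> 0 < sv_eps g M i.
Proof. by move=> g0 M0; rewrite divr_gt0 ?exprn_gt0 ?mulr_gt0 ?exprn_gt0 ?ltr0Sn. Qed.

Lemma cauchy_prod_sv_eps g M k : 0 < M ->
  cauchy_prod (sv_eps g M) (sv_eps g M) k =
  g ^+ k.+2 / (100 * M ^+ 2) * cauchy_prod inv_sq inv_sq k.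
Proof.
move=> M_gt0; rewrite /cauchy_prod mulr_sumr; apply: eq_bigr => i _.
have ik : (i <= k)%N by rewrite -ltnS.
have -> : (k.+2 = i.+1 + (k - i).+1)%N by lia.
rewrite /sv_eps /inv_sq exprD.
have a_gt0 : 0 < (i.+1)%:R :> R by rewrite ltr0Sn.
have b_gt0 : 0 < ((k - i).+1)%:R :> R by rewrite ltr0Sn.
move: a_gt0 b_gt0; set a : R := (i.+1)%:R; set b : R := ((k - i).+1)%:R.
by clearbody a b => a_gt0 b_gt0; field; rewrite !gt_eqF.
Qed.

(* After dividing by c g^(k+2) / (100 M^2 (k+2)^2) it remains that
   c (g T_(k+1) + T_k) (k+2)^2 <= 10 for the Cauchy sums T of inv_sq, each scaled one being <= 6. *)
Lemma sv_eps_recursion_le g c M k :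
  0 < g -> g < 2^-1 -> 0 < c -> c <= 1 -> 0 < M ->
  c * sv_eps g M k.+1 + c ^+ 2 * (cauchy_prod (sv_eps g M) (sv_eps g M) k.+1
                                  + cauchy_prod (sv_eps g M) (sv_eps g M) k)
  <= c * (1 + M^-1) * sv_eps g M k.+1.
Proof.
move=> g_gt0 g_lt c_gt0 c_le1 M_gt0; rewrite !cauchy_prod_sv_eps //.
set T1 := cauchy_prod inv_sq inv_sq k.+1; set T0 := cauchy_prod inv_sq inv_sq k.
have T1_ge0 : 0 <= T1 by apply: cauchy_prod_ge0; apply: inv_sq_ge0.
have T0_ge0 : 0 <= T0 by apply: cauchy_prod_ge0; apply: inv_sq_ge0.
set K : R := (k.+2)%:R; have K_gt0 : 0 < K by rewrite ltr0Sn.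
have X_le : T1 * K ^+ 2 <= 6.
  apply: le_trans (cauchy_prod_inv_sq_le k.+1); rewrite ler_wpM2l //.
  by rewrite lerXn2r ?nnegrE ?ler0n // ler_nat.
have Y_le : T0 * K ^+ 2 <= 6 by apply: cauchy_prod_inv_sq_le.
have key : c * (g * (T1 * K ^+ 2) + T0 * K ^+ 2) <= 10.
  have X_ge0 : 0 <= T1 * K ^+ 2 by rewrite mulr_ge0 ?sqr_ge0.
  have Y_ge0 : 0 <= T0 * K ^+ 2 by rewrite mulr_ge0 ?sqr_ge0.
  have gX : g * (T1 * K ^+ 2) <= 2^-1 * 6 by apply: ler_pM => //; apply: ltW.
  have Z_ge0 : 0 <= g * (T1 * K ^+ 2) + T0 * K ^+ 2 by rewrite addr_ge0 // mulr_ge0 // ltW.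
  by apply: le_trans (ler_piMl Z_ge0 c_le1) _; move: gX Y_le; lra.
rewrite -subr_ge0.
have -> : c * (1 + M^-1) * sv_eps g M k.+1 - (c * sv_eps g M k.+1
      + c ^+ 2 * (g ^+ k.+3 / (100 * M ^+ 2) * T1 + g ^+ k.+2 / (100 * M ^+ 2) * T0))
    = c * g ^+ k.+2 / (100 * M ^+ 2 * K ^+ 2) * (10 - c * (g * (T1 * K ^+ 2) + T0 * K ^+ 2)).
  rewrite /sv_eps -/K [g ^+ k.+3]exprSr; move: K_gt0; clearbody K T1 T0 => K_gt0.
  by field; rewrite !gt_eqF.
apply: mulr_ge0; last by rewrite subr_ge0.
have N_gt0 : 0 < c * g ^+ k.+2 by rewrite mulr_gt0 // exprn_gt0.
have D_gt0 : 0 < 100 * M ^+ 2 * K ^+ 2 by rewrite !mulr_gt0 // exprn_gt0.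
by rewrite ltW // divr_gt0.
Qed.

End Numerics.

Section ExpBounds.
Variable R : realType.

(* From 1 - 1/6 <= exp(-1/6) and (5/6)^6 >= 1/3. *)
Lemma expR1_le3 : expR 1 <= 3 :> R.
Proof.
have low : 1 - 6^-1 <= expR (- 6^-1) :> R by rewrite expR_ge1Dx.
have : (1 - 6^-1) ^+ 6 <= expR (- 6^-1) ^+ 6 :> R.
  by rewrite lerXn2r ?nnegrE ?expR_ge0 //; lra.
rewrite -expRM_natl mulrN mulfV ?pnatr_eq0 // expRN.
have : 3^-1 <= (1 - 6^-1) ^+ 6 :> R by rewrite !exprS expr0; lra.
move=> /le_trans h /h; rewrite lef_pV2 ?posrE ?expR_gt0 //.
Qed.

Lemma expr_1DVn_le3 m t : (0 < m)%N -> (t <= m)%N -> (1 + (m%:R : R)^-1) ^+ t <= 3.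
Proof.
move=> m_gt0 tm; set x : R := m%:R^-1.
have x_ge0 : 0 <= x by rewrite invr_ge0 ler0n.
apply: le_trans (_ : (1 + x) ^+ m <= 3); first by rewrite ler_weXn2l // lerDl.
apply: le_trans (_ : expR x ^+ m <= 3).
  by rewrite lerXn2r ?nnegrE ?expR_ge0 ?expR_ge1Dx // addr_ge0.
by rewrite -expRM_natl /x mulfV ?pnatr_eq0 -?lt0n // expR1_le3.
Qed.

End ExpBounds.

Section SVApproximation.
Variables (R : realType) (w : nat).
Implicit Types (a b : R) (A W Wt : 'M[R]_w) (x y z : 'cV[R]_w).

Definition bform x A y : R := (x^T *m A *m y) 0 0.

Lemma bformD x A1 A2 y : bform x (A1 + A2) y = bform x A1 y + bform x A2 y.
Proof. by rewrite /bform mulmxDr mulmxDl mxE. Qed.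

Lemma bformB x A1 A2 y : bform x (A1 - A2) y = bform x A1 y - bform x A2 y.
Proof. by rewrite /bform mulmxBr mulmxBl !mxE. Qed.

Lemma bform_sum x y (I : finType) (F : I -> 'M[R]_w) :
  bform x (\sum_i F i) y = \sum_i bform x (F i) y.
Proof. by rewrite /bform mulmx_sumr mulmx_suml summxE. Qed.

Lemma bformZl c x A y : bform (c *: x) A y = c * bform x A y.
Proof. by rewrite /bform linearZ /= -!scalemxAl mxE. Qed.

Lemma bform_mulmxr x A1 A2 y : bform x (A1 *m A2) y = bform x A1 (A2 *m y).
Proof. by rewrite /bform !mulmxA. Qed.

Lemma bform_mulmxl x A1 A2 y : bform x (A1 *m A2) y = bform (A1^T *m x) A2 y.
Proof. by rewrite /bform trmx_mul trmxK !mulmxA. Qed.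

Lemma bform_sqnorm A y : bform (A *m y) A y = sqnorm (A *m y).
Proof.
by rewrite /bform /sqnorm -mulmxA mxE; apply: eq_bigr => j _; rewrite mxE expr2.
Qed.

Lemma sqnorm_ge0 z : 0 <= sqnorm z.
Proof. by apply: sumr_ge0 => j _; rewrite sqr_ge0. Qed.

Lemma sqnormZ c z : sqnorm (c *: z) = c ^+ 2 * sqnorm z.
Proof. by rewrite /sqnorm mulr_sumr; apply: eq_bigr => j _; rewrite mxE exprMn. Qed.

Lemma DfunZ A c z : Dfun A (c *: z) = c ^+ 2 * Dfun A z.
Proof. by rewrite /Dfun -scalemxAr !sqnormZ mulrBr. Qed.

Lemma Dfun_le_sqnorm A z : Dfun A z <= sqnorm z.
Proof. by rewrite /Dfun lerBlDr lerDl sqnorm_ge0. Qed.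

Lemma Dfun_mulmx A1 A2 y : Dfun (A1 *m A2) y = Dfun A2 y + Dfun A1 (A2 *m y).
Proof. by rewrite /Dfun -mulmxA; ring. Qed.

Definition nonexpansive A := forall y, sqnorm (A *m y) <= sqnorm y.

Lemma nonexpansive_Dfun_ge0 A y : nonexpansive A -> 0 <= Dfun A y.
Proof. by move=> neA; rewrite subr_ge0. Qed.

Lemma nonexpansive_mulmx A1 A2 :
  nonexpansive A1 -> nonexpansive A2 -> nonexpansive (A1 *m A2).
Proof. by move=> ne1 ne2 y; rewrite -mulmxA; apply: le_trans (ne1 _) (ne2 _). Qed.

Lemma sqr_wsum_le (I : finType) (p f : I -> R) :
  (forall i, 0 <= p i) -> \sum_i p i <= 1 ->
  (\sum_i p i * f i) ^+ 2 <= \sum_i p i * f i ^+ 2.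
Proof.
move=> p_ge0 p_le1; set S := \sum_i p i * f i.
have : 0 <= \sum_i p i * (f i - S) ^+ 2.
  by apply: sumr_ge0 => i _; rewrite mulr_ge0 ?sqr_ge0.
rewrite (eq_bigr (fun i => p i * f i ^+ 2 - 2 * S * (p i * f i) + S ^+ 2 * p i));
  last by move=> i _; ring.
rewrite big_split sumrB /= -!mulr_sumr -/S.
have : S ^+ 2 * \sum_i p i <= S ^+ 2 by rewrite ler_piMr ?sqr_ge0.
by rewrite expr2; lra.
Qed.

Definition doubly_substochastic A :=
  [/\ forall u v, 0 <= A u v, forall u, \sum_v A u v <= 1 & forall v, \sum_u A u v <= 1].

Lemma doubly_substochastic_tr A : doubly_substochastic A -> doubly_substochastic A^T.
Proof.
case=> A_ge0 rows cols; split=> [u v|u|v]; rewrite ?mxE //.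
- by under eq_bigr do rewrite mxE.
- by under eq_bigr do rewrite mxE.
Qed.

(* Jensen on each row, then the column sums. *)
Lemma doubly_substochastic_nonexpansive A : doubly_substochastic A -> nonexpansive A.
Proof.
case=> A_ge0 rows cols y; rewrite /sqnorm.
apply: (@le_trans _ _ (\sum_u \sum_v A u v * y v 0 ^+ 2)).
  by apply: ler_sum => u _; rewrite mxE; apply: sqr_wsum_le.
rewrite exchange_big /=; apply: ler_sum => v _.
by rewrite -mulr_suml ler_piMl ?sqr_ge0.
Qed.

Lemma Dfun_mean_ge0 W x y :
  nonexpansive W -> nonexpansive W^T -> 0 <= (Dfun W^T x + Dfun W y) / 2.
Proof.
by move=> neW neWT; rewrite divr_ge0 // addr_ge0 // nonexpansive_Dfun_ge0.
Qed.

Lemma sv_approx_refl a W :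
  0 <= a -> nonexpansive W -> nonexpansive W^T -> sv_approx a W W.
Proof.
move=> a_ge0 neW neWT x y.
by rewrite subrr mulmx0 mul0mx mxE normr0 mulr_ge0 // Dfun_mean_ge0.
Qed.

Lemma sv_approx_weaken a b W Wt :
  a <= b -> nonexpansive W -> nonexpansive W^T -> sv_approx a W Wt -> sv_approx b W Wt.
Proof.
move=> ab neW neWT sv x y.
by apply: le_trans (sv x y) _; rewrite ler_wpM2r // Dfun_mean_ge0.
Qed.

(* Test the approximation against x = z / a with z = (Wt - W) y. *)
Lemma sv_approx_sqnorm a W Wt y :
  0 < a -> sv_approx a W Wt -> sqnorm ((Wt - W) *m y) <= a ^+ 2 * Dfun W y.
Proof.
move=> a_gt0 sv; set z := (Wt - W) *m y.
have := sv (a^-1 *: z) y; rewrite -/(bform _ _ _) bformZl bform_sqnorm -/z DfunZ.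
have := Dfun_le_sqnorm W^T z; have := sqnorm_ge0 z.
set s := sqnorm z; set d := Dfun W^T z; set e := Dfun W y => s_ge0 d_le.
have as_ge0 : 0 <= a^-1 * s by rewrite mulr_ge0 // invr_ge0 ltW.
rewrite ger0_norm // => le.
have : a * (a^-1 * s) <= a * (a * ((a^-1 ^+ 2 * d + e) / 2)) by rewrite ler_pM2l.
have -> : a * (a^-1 * s) = s by rewrite mulrA mulfV ?gt_eqF ?mul1r.
have -> : a * (a * ((a^-1 ^+ 2 * d + e) / 2)) = (d + a ^+ 2 * e) / 2.
  by field; rewrite gt_eqF.
by move: d_le; lra.
Qed.

(* Test the first approximation against (b x, (A2 - W2) y), which balances the two D terms. *)
Lemma sv_approx_mulmx_err a b W1 W2 A1 A2 x y :
  0 < a -> 0 < b -> sv_approx a W1 A1 -> sv_approx b W2 A2 ->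
  `|bform x ((A1 - W1) *m (A2 - W2)) y| <= a * b * ((Dfun W1^T x + Dfun W2 y) / 2).
Proof.
move=> a_gt0 b_gt0 sv1 sv2; rewrite bform_mulmxr; set z := (A2 - W2) *m y.
have z_le := sv_approx_sqnorm y b_gt0 sv2; rewrite -/z in z_le.
have := sv1 (b *: x) z; rewrite -/(bform _ _ _) bformZl DfunZ normrM gtr0_norm //.
have := Dfun_le_sqnorm W1 z => Dz_le le.
rewrite -(ler_pM2l b_gt0); apply: le_trans le _.
rewrite [X in _ <= X](_ : _ = a * ((b ^+ 2 * Dfun W1^T x + b ^+ 2 * Dfun W2 y) / 2)).
  by rewrite ler_pM2l // ler_pM2r ?invr_gt0 // lerD2l (le_trans Dz_le).
by rewrite expr2; ring.
Qed.

Definition mxconv (As Bs : nat -> 'M[R]_w) k := \sum_(i < k.+1) As i *m Bs (k - i)%N.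

Lemma mulmxDD W1 W2 E1 E2 :
  (W1 + E1) *m (W2 + E2) = W1 *m W2 + E1 *m W2 + W1 *m E2 + E1 *m E2.
Proof. by rewrite mulmxDl !mulmxDr addrACA addrA. Qed.

Lemma mxconv_expand As Bs W1 W2 k :
  mxconv As Bs k = (W1 *m W2) *+ k.+1 + (\sum_(i < k.+1) (As i - W1)) *m W2
    + W1 *m (\sum_(i < k.+1) (Bs i - W2))
    + mxconv (fun i => As i - W1) (fun i => Bs i - W2) k.
Proof.
have -> : (W1 *m W2) *+ k.+1 = \sum_(i < k.+1) W1 *m W2 by rewrite sumr_const card_ord.
rewrite mulmx_suml mulmx_sumr.
rewrite -(big_ord_subn k (fun i => W1 *m (Bs i - W2))) /mxconv -!big_split /=.
by apply: eq_bigr => i _; rewrite -mulmxDD !subrKC.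
Qed.

Lemma mxconv_recursion_err As Bs W1 W2 k :
  mxconv As Bs k.+1 - mxconv As Bs k - W1 *m W2 =
  (As k.+1 - W1) *m W2 + W1 *m (Bs k.+1 - W2)
  + (mxconv (fun i => As i - W1) (fun i => Bs i - W2) k.+1
     - mxconv (fun i => As i - W1) (fun i => Bs i - W2) k).
Proof.
rewrite !(mxconv_expand As Bs W1 W2) ![\sum_(i < k.+2) _]big_ord_recr /=.
rewrite mulmxDl mulmxDr; apply/matrixP => u v; rewrite !mxE; ring.
Qed.

Section Recursion.
Variables (W1 W2 : 'M[R]_w) (As Bs : nat -> 'M[R]_w) (a : nat -> R) (k : nat).
Hypotheses (a_gt0 : forall i, 0 < a i)
  (svA : forall i, (i <= k.+1)%N -> sv_approx (a i) W1 (As i))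
  (svB : forall i, (i <= k.+1)%N -> sv_approx (a i) W2 (Bs i)).

Lemma bform_mxconv_err_le K x y : (K <= k.+1)%N ->
  `|bform x (mxconv (fun i => As i - W1) (fun i => Bs i - W2) K) y|
  <= cauchy_prod a a K * ((Dfun W1^T x + Dfun W2 y) / 2).
Proof.
move=> Kk; rewrite bform_sum mulr_suml; apply: le_trans (ler_norm_sum _ _ _) _.
apply: ler_sum => i _; have iK : (i <= K)%N by rewrite -ltnS.
by apply: sv_approx_mulmx_err; rewrite ?a_gt0 //; [apply: svA | apply: svB]; lia.
Qed.

Lemma sv_approx_mxconv_recursion :
  nonexpansive W1 -> nonexpansive W2^T ->
  sv_approx (a k.+1 + cauchy_prod a a k.+1 + cauchy_prod a a k)
    (W1 *m W2) (mxconv As Bs k.+1 - mxconv As Bs k).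
Proof.
move=> neW1 neW2T x y; rewrite -/(bform _ _ _) mxconv_recursion_err bformD bformB bformD.
set Q := (Dfun (W1 *m W2)^T x + Dfun (W1 *m W2) y) / 2.
have Q_split : Q = ((Dfun W1^T x + Dfun W1 (W2 *m y))
                    + (Dfun W2^T (W1^T *m x) + Dfun W2 y)) / 2.
  by rewrite /Q trmx_mul !Dfun_mulmx; congr (_ / 2); ring.
have Q_ge : (Dfun W1^T x + Dfun W2 y) / 2 <= Q.
  rewrite Q_split ler_pM2r ?invr_gt0 //.
  have := nonexpansive_Dfun_ge0 (W2 *m y) neW1.
  have := nonexpansive_Dfun_ge0 (W1^T *m x) neW2T; lra.
have first_order : `|bform x ((As k.+1 - W1) *m W2) y + bform x (W1 *m (Bs k.+1 - W2)) y|
    <= a k.+1 * Q.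
  rewrite bform_mulmxr bform_mulmxl; apply: le_trans (ler_normD _ _) _.
  have := svA (leqnn _) x (W2 *m y); have := svB (leqnn _) (W1^T *m x) y.
  by rewrite -!/(bform _ _ _) Q_split; lra.
have conv_le K : (K <= k.+1)%N ->
    `|bform x (mxconv (fun i => As i - W1) (fun i => Bs i - W2) K) y|
    <= cauchy_prod a a K * Q.
  move=> Kk; apply: le_trans (bform_mxconv_err_le x y Kk) _.
  by rewrite ler_wpM2l //; apply: cauchy_prod_ge0 => i; apply: ltW.
rewrite addrA !mulrDl; apply: le_trans (ler_normB _ _) _.
rewrite lerD ?conv_le //; apply: le_trans (ler_normD _ _) _.
by rewrite lerD ?conv_le.
Qed.

End Recursion.

End SVApproximation.

Section ROBP.
Variables (R : realType) (w n : nat) (B : nat -> 'I_w -> bool -> 'I_w).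

Lemma sum_indicator (b : 'I_w) : \sum_v (if b == v then 1 else 0 : R) = 1.
Proof. by rewrite (bigD1 b) //= eqxx big1 ?addr0 // => v; rewrite eq_sym => /negbTE ->. Qed.

Lemma Mi_row_sum i u : \sum_v Mi R B i u v = 1.
Proof.
under eq_bigr do rewrite !mxE.
by rewrite -mulr_sumr big_split /= !sum_indicator; lra.
Qed.

Lemma Mi_col_sum i v : regular_robp n B -> (1 <= i <= n)%N -> \sum_u Mi R B i u v = 1.
Proof.
move=> regB i_n; under eq_bigr do rewrite !mxE.
rewrite -mulr_sumr.
have -> : \sum_u ((if B i u false == v then 1 else 0) + (if B i u true == v then 1 else 0))
    = \sum_(ub : 'I_w * bool) (if B i ub.1 ub.2 == v then 1 else 0) :> R.
  rewrite -(pair_bigA _ (fun u b => if B i u b == v then 1 else 0 : R)) /=.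
  by apply: eq_bigr => u _; rewrite big_bool addrC.
rewrite -big_mkcond sumr_const.
have -> : #|[pred ub : 'I_w * bool | B i ub.1 ub.2 == v]| = 2%N.
  by rewrite -(regB i i_n v); apply: eq_card => ub; rewrite inE.
lra.
Qed.

Lemma Mi_doubly_substochastic i :
  regular_robp n B -> (1 <= i <= n)%N -> doubly_substochastic (Mi R B i).
Proof.
move=> regB i_n; split=> [u v|u|v]; last by rewrite Mi_col_sum.
- by rewrite !mxE; case: eqP; case: eqP => _ _; lra.
- by rewrite Mi_row_sum.
Qed.

Lemma Mlr_split l mid r :
  (l <= mid <= r)%N -> Mlr R B l r = Mlr R B l mid *m Mlr R B mid r.
Proof.
move=> /andP[lm mr]; rewrite /Mlr.
have -> : (r - l = (mid - l) + (r - mid))%N by lia.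
rewrite iotaD foldr_cat subnKC //.
by elim: (iota l _) => [|i s IH] /=; rewrite ?mul1mx // IH mulmxA.
Qed.

Lemma Mlr_succ l : Mlr R B l l.+1 = Mi R B l.+1.
Proof. by rewrite /Mlr subSnn /= mulmx1. Qed.

Lemma Mlr_nonexpansive l r : regular_robp n B -> (r <= n)%N ->
  nonexpansive (Mlr R B l r) /\ nonexpansive (Mlr R B l r)^T.
Proof.
move=> regB r_n; rewrite /Mlr.
have : {in iota l (r - l), forall i, 1 <= i.+1 <= n}%N.
  by move=> i; rewrite mem_iota => /andP[? ?]; lia.
elim: (iota l (r - l)) => [|i s IH] s_n /=.
  by rewrite trmx1; split=> y; rewrite mul1mx.
have [neS neST] := IH (fun j js => s_n j (mem_behead (s := i :: s) js)).
have dsM := Mi_doubly_substochastic regB (s_n i (mem_head _ _)).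
rewrite trmx_mul; split; apply: nonexpansive_mulmx => //.
- exact: doubly_substochastic_nonexpansive.
- exact/doubly_substochastic_nonexpansive/doubly_substochastic_tr.
Qed.

End ROBP.

Lemma in_BS_length n l r : in_BS n l r -> exists t, (r - l = 2 ^ t)%N /\ (r <= n)%N.
Proof. by case=> i [t [_ [-> /andP[_ r_n]]]]; exists t; rewrite addKn. Qed.

Lemma in_BS_halves n l r t : in_BS n l r -> (r - l = 2 ^ t.+1)%N ->
  let mid := ((l + r) %/ 2)%N in
  [/\ in_BS n l mid, in_BS n mid r, (mid - l = 2 ^ t)%N, (r - mid = 2 ^ t)%N
    & (l <= mid <= r)%N].
Proof.
case=> i [t' [l_eq [r_eq lr]]] len mid.
have e : (2 ^ t' = 2 * 2 ^ t)%N by rewrite -expnS -len r_eq addKn.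
rewrite e in l_eq r_eq; set p := (2 ^ t)%N in l_eq r_eq *.
have p_gt0 : (0 < p)%N by rewrite expn_gt0.
have mid_eq : mid = (l + p)%N by rewrite /mid; lia.
split; [exists (2 * i)%N, t | exists (2 * i).+1, t | lia | lia | lia]; rewrite -/p; lia.
Qed.

Section DyadicRecursion.
Variables (R : realType) (w n m : nat) (B : nat -> 'I_w -> bool -> 'I_w).
Variables (Mt : nat -> nat -> nat -> 'M[R]_w) (gamma : R).
Hypotheses (n_eq : n = (2 ^ m)%N) (m_gt0 : (0 < m)%N) (regB : regular_robp n B).
Hypotheses (gamma_gt0 : 0 < gamma) (gamma_lt : gamma < 2^-1).

Local Notation eps := (sv_eps gamma m%:R).
Local Notation C t := ((1 + m%:R^-1) ^+ t / 3 : R).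

Hypothesis Mt_base :
  forall l r, in_BS n l r -> sv_approx (eps 0%N / 3) (Mlr R B l r) (Mt 0%N l r).
Hypothesis Mt_leaf :
  forall k l r, in_BS n l r -> (r - l = 1)%N -> (1 <= k)%N -> Mt k l r = Mi R B r.
Hypothesis Mt_node : forall k l r, in_BS n l r -> (2 <= r - l)%N -> (1 <= k)%N ->
  let mid := ((l + r) %/ 2)%N in
  Mt k l r = \sum_(i < k.+1) (Mt i l mid *m Mt (k - i)%N mid r)
           - \sum_(i < k) (Mt i l mid *m Mt (k.-1 - i)%N mid r).

Let mR_gt0 : 0 < m%:R :> R. Proof. by rewrite ltr0n. Qed.

Let C_ge_third t : 3^-1 <= C t.
Proof.
by rewrite -[X in X <= _]mul1r ler_pM2r ?invr_gt0 // exprn_ege1 // lerDl invr_ge0 ltW.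
Qed.

Let C_gt0 t : 0 < C t.
Proof. by apply: lt_le_trans (C_ge_third t); rewrite invr_gt0. Qed.

Let C_le1 t : (t <= m)%N -> C t <= 1.
Proof. by move=> tm; rewrite ler_pdivrMr // mul1r expr_1DVn_le3. Qed.

Lemma Mlr_nonexpansive_BS l r : in_BS n l r ->
  nonexpansive (Mlr R B l r) /\ nonexpansive (Mlr R B l r)^T.
Proof. by case/in_BS_length => t [_ r_n]; apply: (Mlr_nonexpansive R l regB r_n). Qed.

Lemma Mt_sv_approx_leaf k l r : in_BS n l r -> (r - l = 1)%N ->
  sv_approx (C 0 * eps k) (Mlr R B l r) (Mt k l r).
Proof.
move=> lr len; case: k => [|k]; first by rewrite expr0 mul1r mulrC; apply: Mt_base.
have [ne neT] := Mlr_nonexpansive_BS lr.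
have r_eq : r = l.+1 by lia.
subst r; rewrite Mt_leaf // -Mlr_succ; apply: sv_approx_refl => //.
by rewrite ltW // mulr_gt0 // sv_eps_gt0.
Qed.

Lemma Mt_sv_approx_node t k l r : in_BS n l r -> (r - l = 2 ^ t.+1)%N ->
  (forall k l r, in_BS n l r -> (r - l = 2 ^ t)%N ->
     sv_approx (C t * eps k) (Mlr R B l r) (Mt k l r)) ->
  sv_approx (C t.+1 * eps k) (Mlr R B l r) (Mt k l r).
Proof.
move=> lr len IH; have [ne neT] := Mlr_nonexpansive_BS lr.
have t_m : (t.+1 <= m)%N.
  case/in_BS_length: lr => _ [_ r_n].
  by rewrite -(leq_exp2l _ _ (isT : 1 < 2)%N) -n_eq -len; lia.
case: (in_BS_halves lr len); set mid := ((l + r) %/ 2)%N => lmid midr dl dr mid_lr.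
have [neL _] := Mlr_nonexpansive_BS lmid; have [_ neRT] := Mlr_nonexpansive_BS midr.
case: k => [|k].
  apply: sv_approx_weaken (Mt_base lr) => //.
  by rewrite [X in _ <= X]mulrC ler_pM2l ?sv_eps_gt0 // C_ge_third.
have -> : Mt k.+1 l r =
    mxconv (fun i => Mt i l mid) (fun i => Mt i mid r) k.+1
    - mxconv (fun i => Mt i l mid) (fun i => Mt i mid r) k.
  by apply: Mt_node; rewrite // len expnS; have := expn_gt0 2 t; lia.
rewrite (Mlr_split R B mid_lr) in ne neT *.
apply: sv_approx_weaken (sv_approx_mxconv_recursion (a := fun i => C t * eps i) _ _ _ _ _) => //.
- rewrite !cauchy_prodZ -addrA -mulrDr.
  apply: le_trans (sv_eps_recursion_le k gamma_gt0 gamma_lt (C_gt0 t) (C_le1 (ltnW t_m)) mR_gt0) _.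
  by rewrite exprSr [_ / 3 * _]mulrAC.
- by move=> i; rewrite mulr_gt0 // sv_eps_gt0.
- by move=> i _; apply: IH lmid dl.
- by move=> i _; apply: IH midr dr.
Qed.

Lemma Mt_sv_approx t k l r : in_BS n l r -> (r - l = 2 ^ t)%N ->
  sv_approx (C t * eps k) (Mlr R B l r) (Mt k l r).
Proof.
elim: t k l r => [|t IH] k l r lr len; first exact: Mt_sv_approx_leaf.
exact: Mt_sv_approx_node IH.
Qed.

End DyadicRecursion.

Theorem lemma4p5 (R : realType) (w n m : nat) (B : nat -> 'I_w -> bool -> 'I_w)
  (Mt : nat -> nat -> nat -> 'M[R]_w) (gamma : R) :
  n = (2 ^ m)%N -> (1 <= m)%N ->
  regular_robp n B ->
  0 < gamma -> gamma < 2^-1 ->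
  let eps := fun i : nat => gamma ^+ i.+1 / (10 * (i.+1)%:R ^+ 2 * m%:R) in
  let C := fun t : nat => (1 + m%:R^-1) ^+ t / 3 in
  (* level 0: SV approximations of the true products *)
  (forall l r, in_BS n l r -> sv_approx (eps 0%N / 3) (Mlr R B l r) (Mt 0%N l r)) ->
  (* recursion, length 1 *)
  (forall k l r, in_BS n l r -> (r - l = 1)%N -> (1 <= k)%N -> Mt k l r = Mi R B r) ->
  (* recursion, length >= 2 *)
  (forall k l r, in_BS n l r -> (2 <= r - l)%N -> (1 <= k)%N ->
     let mid := ((l + r) %/ 2)%N in
     Mt k l r = \sum_(i < k.+1) (Mt i l mid *m Mt (k - i)%N mid r)
              - \sum_(i < k) (Mt i l mid *m Mt (k.-1 - i)%N mid r)) ->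
  forall k l r, in_BS n l r ->
    sv_approx (C (trunc_log 2 (r - l)) * eps k) (Mlr R B l r) (Mt k l r).
Proof.
move=> n_eq m_gt0 regB gamma_gt0 gamma_lt eps C Mt_base Mt_leaf Mt_node k l r lr.
have [t [len _]] := in_BS_length lr.
rewrite len trunc_expnK //.
exact: (Mt_sv_approx n_eq m_gt0 regB gamma_gt0 gamma_lt Mt_base Mt_leaf Mt_node).
Qed.
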